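(* Let $T$ be a tree with at least one edge, let $p(T)$ be the number of pendant vertices of $T$, and let $\widetilde{T}$ be the subtree obtained from $T$ by removing all pendant vertices of $T$. Then (i) $\alpha(T)<\alpha(\widetilde{T})+p(T)$; (ii) if $D\subseteq V_T$ satisfies $\alpha(T)=\alpha(T-D)+|D|$, then there is a pendant vertex $v$ of $T$ with $v\notin D$.
   Context: $\alpha(\cdot)$ denotes the independence number. A pendant vertex is a vertex of degree one. $T-D$ denotes the graph obtained from $T$ by deleting the vertices of $D$ and their incident edges. *)

(* A simple graph is a symmetric irreflexive relation e on a finType V. *)
From mathcomp Require Import all_boot.
Set Implicit Arguments. Unset Strict Implicit. Unset Printing Implicit Defensive.

Section Graphs.
Variables (V : finType) (e : rel V).

Definition connected_graph : Prop := forall x y : V, connect e x y.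

Definition has_cycle : Prop :=
  exists (x : V) (p : seq V), [/\ 2 <= size p, uniq (x :: p), path e x p & e (last x p) x].

Definition is_tree : Prop := connected_graph /\ ~ has_cycle.

Definition independent (I : {set V}) : bool :=
  [forall x in I, forall y in I, ~~ e x y].

(* independence number of the subgraph induced on S *)
Definition alpha_on (S : {set V}) : nat :=
  \max_(I : {set V} | independent I && (I \subset S)) #|I|.

Definition alpha : nat := alpha_on setT.

Definition degree (x : V) : nat := #|[set y | e x y]|.

Definition pendants : {set V} := [set x | degree x == 1].

End Graphs.

From mathcomp Require Import all_boot zify.
Set Implicit Arguments. Unset Strict Implicit. Unset Printing Implicit Defensive.

(* Write m(S) for the number of edges induced on S.  In any graph
   alpha(S) >= |S| - m(S) (delete one end of every edge), and in a forest
   m(S) <= |S| - 1 for nonempty S (peel off a leaf).  Hence if K is an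
   independent subset of a nonempty S in a forest and every vertex of K has at
   least two neighbours in S, then at least 2|K| edges of S meet K, S \ K spans
   at most |S \ K| - |K| - 1 edges, and alpha(S \ K) > |K|.
   For (i), let I be a maximum independent set of T and P the pendant
   vertices.  If P is not contained in I the bound is immediate; otherwise the
   neighbours of K = I \ P are all non-pendant, so the above applies to
   S = V \ P.  For (ii), deleting a superset D of P would give
   alpha(T - P) + |P| <= alpha(T - D) + |D|, contradicting (i). *)

Section IndependenceNumber.
Variables (V : finType) (e : rel V).

Lemma independentP (I : {set V}) :
  reflect {in I &, forall x y, ~~ e x y} (independent e I).
Proof.
apply: (iffP forall_inP) => [indI x y xI yI | indI x xI].
  by have /forall_inP := indI x xI; apply.
by apply/forall_inP => y yI; apply: indI.
Qed.

Lemma independentS (I J : {set V}) : J \subset I -> independent e I -> independent e J.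
Proof.
move=> /subsetP sJI /independentP indI; apply/independentP => x y xJ yJ.
by apply: indI; apply: sJI.
Qed.

Lemma card_le_alpha_on (S I : {set V}) :
  independent e I -> I \subset S -> #|I| <= alpha_on e S.
Proof.
move=> indI sIS.
by apply: (leq_bigmax_cond (P := fun J => independent e J && (J \subset S))); rewrite indI.
Qed.

Lemma alpha_on_witness (S : {set V}) :
  exists2 I : {set V}, independent e I && (I \subset S) & #|I| = alpha_on e S.
Proof.
have ind0 : independent e set0 && (set0 \subset S).
  by rewrite sub0set andbT; apply/independentP => x y; rewrite inE.
rewrite /alpha_on (bigmax_eq_arg set0 ind0).
by case: arg_maxnP => // I; exists I.
Qed.

Lemma alpha_onS (S S' : {set V}) : S \subset S' -> alpha_on e S <= alpha_on e S'.
Proof.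
move=> sSS'; have [I /andP[indI sIS] <-] := alpha_on_witness S.
by apply: card_le_alpha_on (subset_trans sIS sSS').
Qed.

Lemma alpha_on_setD (S S' : {set V}) : alpha_on e S <= alpha_on e S' + #|S :\: S'|.
Proof.
have [I /andP[indI sIS] <-] := alpha_on_witness S.
rewrite -(cardsID S' I) leq_add //.
  by apply: card_le_alpha_on (subsetIr _ _); apply: independentS indI; apply: subsetIl.
by apply/subset_leq_card/setSD.
Qed.

Lemma alpha_deletion_not_subset (P D : {set V}) :
  alpha e < alpha_on e (~: P) + #|P| -> alpha e = alpha_on e (~: D) + #|D| ->
  ~~ (P \subset D).
Proof.
move=> ltP eqD; apply/negP => sPD.
have := alpha_on_setD (~: P) (~: D).
have -> : ~: P :\: ~: D = D :\: P by apply/setP => z; rewrite !inE negbK andbC.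
by have := cardsID P D; rewrite (setIidPr sPD); lia.
Qed.

End IndependenceNumber.

Section DegreeSums.
Variables (V : finType) (e : rel V).
Hypotheses (e_sym : symmetric e) (e_irr : irreflexive e).

Definition nbhd (x : V) : {set V} := [set y | e x y].

Definition deg_in (S : {set V}) (x : V) : nat := #|nbhd x :&: S|.

(* Twice the number of edges of the subgraph induced on [S]. *)
Definition deg_sum (S : {set V}) : nat := \sum_(x in S) deg_in S x.

Lemma deg_inE (S : {set V}) (x : V) : deg_in S x = \sum_(y in S) e x y.
Proof.
rewrite /deg_in -sum1_card big_mkcond [RHS]big_mkcond /=.
by apply: eq_bigr => y _; rewrite !inE andbC; case: (y \in S); case: (e x y).
Qed.

Lemma sum_deg_inC (X Y : {set V}) :
  \sum_(x in X) deg_in Y x = \sum_(y in Y) deg_in X y.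
Proof.
under eq_bigr do rewrite deg_inE; rewrite exchange_big /=.
by apply: eq_bigr => y _; rewrite deg_inE; apply: eq_bigr => x _; rewrite e_sym.
Qed.

Lemma deg_inID (S X : {set V}) (x : V) :
  deg_in S x = deg_in (S :&: X) x + deg_in (S :\: X) x.
Proof. by rewrite /deg_in setIA setIDA cardsID. Qed.

Lemma deg_sum_setD (S X : {set V}) : X \subset S ->
  deg_sum S + deg_sum X = deg_sum (S :\: X) + 2 * \sum_(x in X) deg_in S x.
Proof.
move=> /setIidPr sXS.
have splitX : \sum_(x in X) deg_in S x = deg_sum X + \sum_(x in X) deg_in (S :\: X) x.
  by rewrite -big_split; apply: eq_bigr => x _; rewrite (deg_inID S X) sXS.
have splitSX : \sum_(x in S :\: X) deg_in S x
    = deg_sum (S :\: X) + \sum_(x in X) deg_in (S :\: X) x.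
  rewrite (sum_deg_inC X) -big_split.
  by apply: eq_bigr => x _; rewrite (deg_inID S X) sXS addnC.
rewrite /deg_sum (big_setID X) /= sXS -/(deg_sum X) splitSX -/(deg_sum (S :\: X)).
lia.
Qed.

Lemma deg_sum_eq0 (S : {set V}) : (deg_sum S == 0) = independent e S.
Proof.
apply/idP/independentP => [/eqP S0 x y xS yS | indS].
  apply/negP => exy; have := S0; rewrite /deg_sum (bigD1 x) //= /deg_in.
  by rewrite (cardsD1 y) !inE exy yS.
rewrite sum_nat_eq0; apply/forall_inP => x xS; rewrite cards_eq0; apply/eqP/setP => y.
rewrite !inE; apply/negP => /andP[exy yS].
by have := indS x y xS yS; rewrite exy.
Qed.

Lemma deg_sum1 (x : V) : deg_sum [set x] = 0.
Proof.
apply/eqP; rewrite deg_sum_eq0; apply/independentP => y z.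
by rewrite !inE => /eqP-> /eqP->; rewrite e_irr.
Qed.

Lemma deg_sum_setD1 (S : {set V}) (x : V) : x \in S ->
  deg_sum S = deg_sum (S :\ x) + 2 * deg_in S x.
Proof.
by move=> xS; have := @deg_sum_setD S [set x]; rewrite sub1set xS deg_sum1 big_set1 addn0; apply.
Qed.

Lemma card_le_alpha_on_deg_sum (S : {set V}) :
  2 * #|S| <= 2 * alpha_on e S + deg_sum S.
Proof.
have [n ltSn] := ubnP #|S|; elim: n S ltSn => // n IH S ltSn.
case: (boolP (independent e S)) => [indS | depS].
  by have := card_le_alpha_on indS (subxx S); lia.
have /forall_inPn [x xS degx] : ~~ [forall x in S, deg_in S x == 0].
  by rewrite -sum_nat_eq0 -/(deg_sum S) deg_sum_eq0.
have ltSxn : #|S :\ x| < n by move: ltSn; rewrite (cardsD1 x S) xS.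
have := IH _ ltSxn; have := alpha_onS e (subD1set S x).
rewrite (deg_sum_setD1 xS) (cardsD1 x S) xS; move: degx; lia.
Qed.

End DegreeSums.

Lemma connected_degree_gt0 (V : finType) (e : rel V) (x y v : V) :
  irreflexive e -> connected_graph e -> e x y -> 0 < degree e v.
Proof.
move=> e_irr conn exy.
have [w wv] : exists w, w != v.
  case: (eqVneq x v) => [xv | ]; last by exists x.
  by exists y; rewrite -xv; apply: contraTneq exy => ->; rewrite e_irr.
have /connectP [[|z q] /= pq lq] := conn v w; first by rewrite lq eqxx in wv.
by apply/card_gt0P; exists z; rewrite inE; case/andP: pq.
Qed.

Section Forests.
Variables (V : finType) (e : rel V).
Hypotheses (e_sym : symmetric e) (e_irr : irreflexive e) (acyclic : ~ has_cycle e).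

Lemma chord_has_cycle (x y : V) (p : seq V) :
  uniq (x :: p) -> path e x p -> y \in p -> y != head x p -> e x y -> has_cycle e.
Proof.
move=> up pp yp; case/splitPr: yp up pp => p1 p2 up pp yh exy.
have p1n : p1 != [::] by case: p1 up pp yh => //=; rewrite eqxx.
have catE : x :: p1 ++ y :: p2 = (x :: rcons p1 y) ++ p2 by rewrite /= -cats1 -catA.
exists x, (rcons p1 y); split.
- by rewrite size_rcons; case: p1 p1n {up pp yh catE}.
- by move: up; rewrite catE cat_uniq => /andP[].
- by move: pp; rewrite cat_path rcons_path /= => /andP[-> /andP[-> _]].
- by rewrite last_rcons e_sym.
Qed.

Lemma uniq_path_extend (S : {set V}) (x : V) (p : seq V) :
  x \in S -> 1 < deg_in e S x -> uniq (x :: p) -> path e x p ->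
  exists2 y, y \in S & uniq (y :: x :: p) && e y x.
Proof.
move=> xS degx up pp.
case: (boolP [exists y in nbhd e x :&: S, y \notin x :: p]).
  case/exists_inP => y; rewrite !inE => /andP[exy yS] ynp.
  by exists y; rewrite // cons_uniq ynp up e_sym exy.
move/exists_inPn => nbhd_in_path; exfalso.
have : 0 < #|(nbhd e x :&: S) :\ head x p|.
  by move: degx; rewrite /deg_in (cardsD1 (head x p)); case: (_ \in _); lia.
case/card_gt0P => y; rewrite !inE => /and3P[yh exy yS].
have := nbhd_in_path y; rewrite !inE exy yS negbK => /(_ isT).
case/orP => [/eqP yx | yp]; first by move: exy; rewrite yx e_irr.
exact: acyclic (chord_has_cycle up pp yp yh exy).
Qed.

Lemma exists_leaf (S : {set V}) (x0 : V) :
  x0 \in S -> exists2 u, u \in S & deg_in e S u <= 1.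
Proof.
move=> x0S; case: (boolP [exists u in S, deg_in e S u <= 1]) => [/exists_inP // |].
move/exists_inPn => no_leaf.
have long_path n : exists x p, [/\ x \in S, uniq (x :: p), path e x p & size p = n].
  elim: n => [|n [x [p [xS up pp <-]]]]; first by exists x0, [::].
  have [|y yS /andP[uy eyx]] := uniq_path_extend xS _ up pp; first by rewrite ltnNge no_leaf.
  by exists y, (x :: p); rewrite /= eyx pp.
have [x [p [_ up _ sp]]] := long_path #|V|.
by have := max_card (mem (x :: p)); rewrite (card_uniqP up) /= sp ltnn.
Qed.

Lemma forest_deg_sum (S : {set V}) (x0 : V) : x0 \in S -> deg_sum e S + 2 <= 2 * #|S|.
Proof.
have [n ltSn] := ubnP #|S|; elim: n S ltSn x0 => // n IH S ltSn x0 x0S.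
have [u uS leafu] := exists_leaf x0S.
rewrite (deg_sum_setD1 e_sym e_irr uS) (cardsD1 u S) uS.
case: (set_0Vmem (S :\ u)) => [S0 | [x1 x1S]].
  have : deg_in e S u <= #|S :\ u|.
    apply/subset_leq_card/subsetP => y; rewrite !inE => /andP[euy ->].
    by rewrite andbT; apply: contraTneq euy => ->; rewrite e_irr.
  by rewrite S0 /deg_sum big_set0 cards0; lia.
have ltSun : #|S :\ u| < n by move: ltSn; rewrite (cardsD1 u S) uS.
by have := IH _ ltSun _ x1S; lia.
Qed.

Lemma forest_independent_lt_alpha_on (S K : {set V}) (x0 : V) :
  x0 \in S -> K \subset S -> independent e K -> {in K, forall v, 1 < deg_in e S v} ->
  #|K| < alpha_on e (S :\: K).
Proof.
move=> x0S sKS indK degK.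
have deg_sumK : deg_sum e K = 0 by apply/eqP; rewrite deg_sum_eq0.
have := deg_sum_setD e_sym sKS; rewrite deg_sumK.
have : 2 * #|K| <= \sum_(v in K) deg_in e S v.
  by rewrite mulnC -sum_nat_const; apply: leq_sum => v /degK.
have := forest_deg_sum x0S; have := card_le_alpha_on_deg_sum e_sym e_irr (S :\: K).
rewrite (cardsDS sKS); have := subset_leq_card sKS; lia.
Qed.

Hypothesis no_isolated : forall v, 0 < degree e v.

Lemma alpha_lt_alpha_on_nonpendants (x y : V) : e x y ->
  alpha e < alpha_on e (~: pendants e) + #|pendants e|.
Proof.
move=> exy; set P := pendants e; rewrite /alpha.
have [I /andP[indI _] <-] := alpha_on_witness e setT.
have indIP : independent e (I :\: P) by apply: independentS indI; apply: subsetDl.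
have sIPP : I :\: P \subset ~: P by rewrite setDE subsetIr.
have := card_le_alpha_on indIP sIPP.
rewrite -(cardsID P I); case: (boolP (P \subset I)) => [sPI | nsPI]; last first.
  have : #|I :&: P| < #|P|.
    apply/proper_card; rewrite properEneq subsetIr andbT.
    by apply: contraNneq nsPI => <-; apply: subsetIl.
  lia.
have [x0 x0P] : exists x0, x0 \in ~: P.
  case: (boolP (x \in P)) => xP; last by exists x; rewrite inE.
  case: (boolP (y \in P)) => yP; last by exists y; rewrite inE.
  by move/independentP: indI => /(_ x y (subsetP sPI x xP) (subsetP sPI y yP)); rewrite exy.
have degIP : {in I :\: P, forall v, 1 < deg_in e (~: P) v}.
  move=> v; rewrite inE => /andP[vP vI].
  have -> : deg_in e (~: P) v = degree e v.
    suff /setIidPl nbhd_nonpendant : nbhd e v \subset ~: P by rewrite /deg_in nbhd_nonpendant.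
    apply/subsetP => z; rewrite in_setC [z \in _]inE => evz.
    by apply: contraTN evz => zP; move/independentP: indI; apply; rewrite // (subsetP sPI).
  by move: vP (no_isolated v); rewrite inE; case: (degree e v) => [|[|]].
have := forest_independent_lt_alpha_on x0P sIPP indIP degIP.
have := alpha_onS e (subsetDl (~: P) (I :\: P)).
by rewrite (setIidPr sPI); lia.
Qed.

End Forests.

Theorem corollary1p17 (V : finType) (e : rel V)
  (e_sym : symmetric e) (e_irr : irreflexive e)
  (T_tree : is_tree e) (T_edge : exists x y : V, e x y) :
  (* (i): T~ = T minus its pendant vertices, induced on ~: pendants e *)
  alpha e < alpha_on e (~: pendants e) + #|pendants e|
  /\
  (* (ii): T - D is the subgraph induced on ~: D *)
  (forall D : {set V}, alpha e = alpha_on e (~: D) + #|D| ->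
     exists v : V, v \in pendants e /\ v \notin D).
Proof.
have [conn acyclic] := T_tree; have [x [y exy]] := T_edge.
have no_isolated v : 0 < degree e v := connected_degree_gt0 v e_irr conn exy.
have lt_pendants := alpha_lt_alpha_on_nonpendants e_sym e_irr acyclic no_isolated exy.
split=> // D eqD.
by have /subsetPn [v vP vD] := alpha_deletion_not_subset lt_pendants eqD; exists v.
Qed.
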